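(* Let $m\in\mathbb{N}=\{0,1,2,\dots\}$ and $a>-1$. Then $$\int_{0}^{\infty}\frac{dx}{(x^{4}+2ax^{2}+1)^{m+1}}=\frac{\pi}{2}\,\frac{P_{m}(a)}{[2(a+1)]^{m+1/2}},\qquad P_m(a)=\sum_{l=0}^{m}d_{l,m}a^{l},$$ where $$d_{l,m}=2^{-2m}\sum_{k=l}^{m}2^{k}\binom{2m-2k}{m-k}\binom{m+k}{m}\binom{k}{l},\qquad 0\le l\le m .$$ In particular each $d_{l,m}$ is a positive rational number, and for $m\ge 1$ one has $2^{2m-1}d_{l,m}\in\mathbb{Z}$. *)

From Stdlib Require Import Reals QArith Qreals ZArith.
Open Scope R_scope.

Definition improper_integral_0_infty (f : R -> R) (L : R) : Prop :=
  exists pr : forall b : R, Riemann_integrable f 0 b,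
    forall eps : R, eps > 0 ->
      exists M : R, forall b : R, b >= M -> Rabs (RiemannInt (pr b) - L) < eps.

Definition d_coef (l m : nat) : R :=
  / 2 ^ (2 * m) *
  sum_f l m (fun k => 2 ^ k * Binomial.C (2 * m - 2 * k) (m - k)
                       * Binomial.C (m + k) m * Binomial.C k l).

Definition P_poly (m : nat) (a : R) : R :=
  sum_f_R0 (fun l => d_coef l m * a ^ l) m.

(* Write x^4 + 2ax^2 + 1 = x^2 (s + u^2) with s = 2(a+1) and u = x - 1/x. Folding
   [0, oo) at x = 1 by x |-> 1/x replaces the integrand f by f(x) + x^-2 f(1/x), and the
   substitution tan t = u / sqrt s turns this into a trigonometric polynomial: by the
   identity (x + 1/x) F_{2m+1}(x - 1/x) = x^{2m+1} + x^{-2m-1} for the Fibonacci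
   polynomials F_n,
     f(x) + x^-2 f(1/x) = w(t) dt/dx,
     w(t) = s^{-m-1/2} sum_j C(m+j, 2j) s^j sin^{2j} t cos^{2m-2j} t.
   Hence int_0^b f = int_0^{1/b} f + int_0^{t(b)} w, and as b -> oo this tends to
   int_0^{pi/2} w, a combination of Wallis integrals; exchanging the order of summation
   in P_m turns the result into the claimed value. The arithmetic claims hold because every
   summand of 2^{2m} d_{l,m} is a natural number, even when m >= 1 (for k = 0 it contains
   the even central binomial coefficient C(2m, m)). *)

From Stdlib Require Import Reals QArith Qreals ZArith Lra Lia.
From Coquelicot Require Import Coquelicot.
Open Scope R_scope.

(** * Binomial coefficients and the coefficients d_{l,m} *)

(* Unlike [Binomial.C], this binomial coefficient vanishes when [k > n]. *)
Fixpoint binom (n k : nat) : nat :=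
  match n, k with
  | _, O => 1%nat
  | O, S _ => 0%nat
  | S n', S k' => (binom n' k' + binom n' (S k'))%nat
  end.

Lemma binom_small n k : (n < k)%nat -> binom n k = 0%nat.
Proof.
  revert k; induction n as [|n IH]; intros [|k] Hnk; simpl; try lia; auto.
  rewrite !IH; lia.
Qed.

Lemma binom_n0 n : binom n 0 = 1%nat.
Proof. now destruct n. Qed.

Lemma INR_binom n k : (k <= n)%nat -> INR (binom n k) = Binomial.C n k.
Proof.
  revert k; induction n as [|n IH]; intros [|k] Hkn; try lia.
  - now rewrite C_n_0.
  - now rewrite C_n_0.
  - simpl binom; rewrite plus_INR.
    destruct (Nat.eq_dec k n) as [->|Hne].
    + rewrite (binom_small n (S n)), IH, !C_n_n by lia. simpl; ring.
    + rewrite !IH by lia. apply pascal; lia.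
Qed.

Lemma sum_f_S (l n : nat) (h : nat -> R) : (l <= n)%nat ->
  sum_f l (S n) h = sum_f l n h + h (S n).
Proof.
  intro Hln. unfold sum_f. replace (S n - l)%nat with (S (n - l)) by lia.
  rewrite tech5. do 2 f_equal. lia.
Qed.

Lemma sum_f_diag (n : nat) (h : nat -> R) : sum_f n n h = h n.
Proof. unfold sum_f. rewrite Nat.sub_diag. reflexivity. Qed.

Lemma sum_binomial_exchange (c : nat -> R) (a : R) (n : nat) :
  sum_f_R0 (fun l => sum_f l n (fun k => c k * Binomial.C k l) * a ^ l) n =
  sum_f_R0 (fun k => c k * (a + 1) ^ k) n.
Proof.
  induction n as [|n IH].
  - simpl. rewrite sum_f_diag, C_n_0. ring.
  - rewrite tech5, sum_f_diag.
    rewrite (sum_eq _ (fun l => sum_f l n (fun k => c k * Binomial.C k l) * a ^ l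
                               + Binomial.C (S n) l * a ^ l * 1 ^ (S n - l) * c (S n)))
      by (intros i Hi; rewrite sum_f_S, pow1 by lia; ring).
    rewrite plus_sum, IH, <- scal_sum, (tech5 (fun k => c k * (a + 1) ^ k)), binomial, tech5.
    rewrite Nat.sub_diag. ring.
Qed.

Definition d_weight (m k : nat) : R :=
  2 ^ k * Binomial.C (2 * m - 2 * k) (m - k) * Binomial.C (m + k) m.

Lemma d_coef_weight l m :
  d_coef l m = / 2 ^ (2 * m) * sum_f l m (fun k => d_weight m k * Binomial.C k l).
Proof. reflexivity. Qed.

Lemma P_poly_shifted (m : nat) (a : R) :
  P_poly m a = / 2 ^ (2 * m) * sum_f_R0 (fun k => d_weight m k * (a + 1) ^ k) m.
Proof.
  unfold P_poly, d_coef.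
  rewrite <- (sum_binomial_exchange (d_weight m)), scal_sum.
  apply sum_eq. intros l _. unfold d_weight. ring.
Qed.

Lemma C_pos n k : 0 < Binomial.C n k.
Proof.
  unfold Binomial.C. apply Rdiv_lt_0_compat; [|apply Rmult_lt_0_compat];
    apply lt_0_INR, lt_O_fact.
Qed.

Lemma d_coef_pos l m : 0 < d_coef l m.
Proof.
  unfold d_coef, sum_f. apply Rmult_lt_0_compat.
  - apply Rinv_0_lt_compat, pow_lt; lra.
  - apply tech1. intros k _.
    apply Rmult_lt_0_compat; [apply Rmult_lt_0_compat; [apply Rmult_lt_0_compat|]|];
      apply C_pos || (apply pow_lt; lra).
Qed.

Lemma sum_f_INR_multiple (c : R) (h : nat -> R) (l m : nat) : (l <= m)%nat ->
  (forall k, (l <= k <= m)%nat -> exists n, h k = c * INR n) ->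
  exists N, sum_f l m h = c * INR N.
Proof.
  intros Hlm Hh. induction m as [|m IH].
  - replace l with 0%nat by lia. rewrite sum_f_diag. apply Hh; lia.
  - destruct (Nat.eq_dec l (S m)) as [->|Hne]; [rewrite sum_f_diag; apply Hh; lia|].
    destruct IH as [N HN]; [lia|intros k Hk; apply Hh; lia|].
    destruct (Hh (S m)) as [n Hn]; [lia|].
    exists (N + n)%nat. rewrite sum_f_S, HN, Hn, plus_INR by lia. ring.
Qed.

Lemma d_term_nat m l k : (l <= k <= m)%nat ->
  d_weight m k * Binomial.C k l
  = INR (2 ^ k * binom (2 * m - 2 * k) (m - k) * binom (m + k) m * binom k l).
Proof.
  intro Hk. unfold d_weight.
  rewrite !mult_INR, pow_INR, !INR_binom by lia. reflexivity.
Qed.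

Lemma central_binom_even m :
  Binomial.C (2 * S m) (S m) = 2 * Binomial.C (S (2 * m)) m.
Proof.
  replace (2 * S m)%nat with (S (S (2 * m))) by lia.
  rewrite <- pascal, (pascal_step1 (S (2 * m)) (S m)) by lia.
  replace (S (2 * m) - S m)%nat with m by lia. ring.
Qed.

Lemma d_term_even m l k : (1 <= m)%nat -> (l <= k <= m)%nat ->
  exists n, d_weight m k * Binomial.C k l = 2 * INR n.
Proof.
  intros Hm Hk. destruct k as [|k].
  - destruct m as [|m]; [lia|]. replace l with 0%nat by lia.
    exists (binom (S (2 * m)) m). unfold d_weight.
    rewrite Nat.mul_0_r, !Nat.sub_0_r, Nat.add_0_r, central_binom_even, INR_binom by lia.
    rewrite !C_n_0, C_n_n. simpl. ring.
  - exists (2 ^ k * binom (2 * m - 2 * S k) (m - S k) * binom (m + S k) m * binom (S k) l)%nat.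
    rewrite d_term_nat by lia. rewrite !mult_INR, !pow_INR. simpl. ring.
Qed.

Lemma Q2R_nat_div (N D : nat) : (0 < D)%nat -> exists q : Q, Q2R q = INR N / INR D.
Proof.
  intro HD. exists (Z.of_nat N # Pos.of_nat D). unfold Q2R. simpl.
  rewrite <- positive_nat_Z, Nat2Pos.id, <- !INR_IZR_INZ by lia. reflexivity.
Qed.

Lemma d_coef_rational l m : (l <= m)%nat -> exists q : Q, Q2R q = d_coef l m.
Proof.
  intro Hlm. destruct (sum_f_INR_multiple 1 (fun k => d_weight m k * Binomial.C k l) l m Hlm)
    as [N HN].
  { intros k Hk. eexists. rewrite d_term_nat by exact Hk. symmetry; apply Rmult_1_l. }
  destruct (Q2R_nat_div N (2 ^ (2 * m))) as [q Hq].
  { apply Nat.neq_0_lt_0, Nat.pow_nonzero. lia. }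
  exists q. rewrite Hq, pow_INR. rewrite d_coef_weight, HN.
  replace (INR 2) with 2 by (simpl; ring). unfold Rdiv. ring.
Qed.

Lemma d_coef_integral l m : (1 <= m)%nat -> (l <= m)%nat ->
  exists z : Z, 2 ^ (2 * m - 1) * d_coef l m = IZR z.
Proof.
  intros Hm Hlm.
  destruct (sum_f_INR_multiple 2 (fun k => d_weight m k * Binomial.C k l) l m Hlm) as [N HN].
  { intros k Hk. apply d_term_even; lia. }
  exists (Z.of_nat N). rewrite <- INR_IZR_INZ. rewrite d_coef_weight, HN.
  replace (2 * m)%nat with (S (2 * m - 1)) at 2 by lia. simpl pow.
  field. apply pow_nonzero; lra.
Qed.

(** * Fibonacci polynomials *)

Fixpoint fib_poly (n : nat) (u : R) : R :=
  match n with
  | O => 0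
  | S O => 1
  | S (S p as q) => u * fib_poly q u + fib_poly p u
  end.

Lemma fib_poly_binet (x y : R) (n : nat) : x * y = -1 ->
  (x - y) * fib_poly n (x + y) = x ^ n - y ^ n.
Proof.
  intro Hxy.
  enough (H : (x - y) * fib_poly n (x + y) = x ^ n - y ^ n /\
              (x - y) * fib_poly (S n) (x + y) = x ^ S n - y ^ S n) by apply H.
  induction n as [|n [IHn IHSn]]; [simpl; split; ring|].
  split; [exact IHSn|].
  transitivity ((x + y) * ((x - y) * fib_poly (S n) (x + y))
                + (x - y) * fib_poly n (x + y)); [simpl; ring|].
  rewrite IHn, IHSn.
  replace (x ^ n - y ^ n) with (- (x * y) * (x ^ n - y ^ n)) by (rewrite Hxy; ring).
  simpl; ring.
Qed.

Definition fib_even (m : nat) (u : R) : R :=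
  sum_f_R0 (fun j => INR (binom (m + j) (2 * j + 1)) * u ^ (2 * j + 1)) m.

Definition fib_odd (m : nat) (u : R) : R :=
  sum_f_R0 (fun j => INR (binom (m + j) (2 * j)) * u ^ (2 * j)) m.

Lemma sum_f_R0_S_zero (h : nat -> R) n : h (S n) = 0 ->
  sum_f_R0 h (S n) = sum_f_R0 h n.
Proof. intro Hz. rewrite tech5, Hz. ring. Qed.

Lemma fib_even_S m u : fib_even (S m) u = u * fib_odd m u + fib_even m u.
Proof.
  unfold fib_even, fib_odd.
  rewrite sum_f_R0_S_zero by (rewrite binom_small by lia; simpl; ring).
  rewrite scal_sum, <- plus_sum. apply sum_eq. intros j _.
  replace (S m + j)%nat with (S (m + j)) by lia.
  replace (2 * j + 1)%nat with (S (2 * j)) by lia.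
  simpl binom. rewrite plus_INR. simpl pow. ring.
Qed.

Lemma fib_odd_S m u : fib_odd (S m) u = u * fib_even (S m) u + fib_odd m u.
Proof.
  unfold fib_even, fib_odd.
  rewrite (sum_f_R0_S_zero (fun j => INR (binom (S m + j) (2 * j + 1)) * _))
    by (rewrite binom_small by lia; simpl; ring).
  rewrite <- (sum_f_R0_S_zero (fun j => INR (binom (m + j) (2 * j)) * u ^ (2 * j)) m)
    by (rewrite binom_small by lia; simpl; ring).
  rewrite !(decomp_sum _ (S m)) by lia. simpl pred.
  rewrite Nat.mul_0_r, !binom_n0, scal_sum, (Rplus_comm (sum_f_R0 _ m)), Rplus_assoc, <- plus_sum.
  f_equal. apply sum_eq. intros j _.
  replace (S m + S j)%nat with (S (S m + j)) by lia.
  replace (m + S j)%nat with (S m + j)%nat by lia.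
  replace (2 * S j)%nat with (S (2 * j + 1)) by lia.
  simpl binom. rewrite plus_INR. simpl pow. ring.
Qed.

Lemma fib_poly_explicit m u :
  fib_poly (2 * m) u = fib_even m u /\ fib_poly (2 * m + 1) u = fib_odd m u.
Proof.
  induction m as [|m [IHe IHo]]; [unfold fib_even, fib_odd; simpl; split; ring|].
  assert (He : fib_poly (2 * S m) u = fib_even (S m) u).
  { replace (2 * S m)%nat with (S (S (2 * m))) by lia.
    rewrite fib_even_S, <- IHe, <- IHo, Nat.add_1_r. reflexivity. }
  split; [exact He|].
  replace (2 * S m + 1)%nat with (S (S (2 * m + 1))) by lia.
  rewrite fib_odd_S, <- He, <- IHo. replace (2 * S m)%nat with (S (2 * m + 1)) by lia.
  reflexivity.
Qed.

Lemma fib_odd_reciprocal (x : R) (m : nat) : x <> 0 ->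
  (x + / x) * fib_odd m (x - / x) = x ^ (2 * m + 1) + (/ x) ^ (2 * m + 1).
Proof.
  intro Hx. destruct (fib_poly_explicit m (x - / x)) as [_ <-].
  replace (x - / x) with (x + - / x) by ring.
  replace (x + / x) with (x - - / x) by ring.
  rewrite fib_poly_binet by (field; exact Hx).
  replace (- / x) with (-1 * / x) by ring.
  rewrite Rpow_mult_distr, Nat.add_1_r, pow_1_odd. ring.
Qed.

(* Coquelicot types integrals in its normed-module structure on [R]; [ring] and [field]
   only see the equation once it is restated at type [R]. *)
Ltac equation_in_R := match goal with |- ?x = ?y => change (@eq R x y) end.

Lemma ex_derive_continuous_R (f : R -> R) x : ex_derive f x -> continuous f x.
Proof. exact (ex_derive_continuous (K := R_AbsRing) (V := R_NormedModule) f x). Qed.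

Lemma ex_RInt_of_ex_derive (f : R -> R) a b : (forall x, ex_derive f x) -> ex_RInt f a b.
Proof.
  intro Hf. apply (@ex_RInt_continuous R_CompleteNormedModule).
  intros z _. apply ex_derive_continuous_R, Hf.
Qed.

Lemma ex_derive_sum_f_R0 (g : nat -> R -> R) (n : nat) x :
  (forall j, ex_derive (g j) x) -> ex_derive (fun y => sum_f_R0 (fun j => g j y) n) x.
Proof.
  intro Hg. induction n as [|n IH]; [apply Hg|].
  apply (ex_derive_plus (K := R_AbsRing) (V := R_NormedModule)); auto.
Qed.

Lemma is_RInt_sum_f_R0 (g : nat -> R -> R) (I : nat -> R) (n : nat) a b :
  (forall j, is_RInt (g j) a b (I j)) ->
  is_RInt (fun x => sum_f_R0 (fun j => g j x) n) a b (sum_f_R0 I n).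
Proof.
  intro Hg. induction n as [|n IH]; [apply Hg|].
  apply (is_RInt_plus (V := R_NormedModule)); auto.
Qed.

Lemma is_derive_RInt_0 (f : R -> R) x : (forall y, ex_derive f y) ->
  is_derive (RInt f 0) x (f x).
Proof.
  intro Hf. apply (is_derive_RInt (V := R_NormedModule) f (RInt f 0) 0 x).
  - apply filter_forall. intro y. apply (RInt_correct (V := R_CompleteNormedModule)).
    apply ex_RInt_of_ex_derive, Hf.
  - apply ex_derive_continuous_R, Hf.
Qed.

Lemma continuous_RInt_0 (f : R -> R) x : (forall y, ex_derive f y) ->
  continuous (RInt f 0) x.
Proof. intro Hf. apply ex_derive_continuous_R. eexists. apply is_derive_RInt_0, Hf. Qed.

Lemma derive_zero_const_pos (D : R -> R) b c : 0 < b -> 0 < c ->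
  (forall t, 0 < t -> is_derive D t 0) -> D b = D c.
Proof.
  intros Hb Hc HD.
  destruct (Rtotal_order b c) as [Hbc|[->|Hcb]]; [|reflexivity|symmetry];
    apply (eq_is_derive (V := R_NormedModule)); try lra; intros t Ht; apply HD; lra.
Qed.

(** * Wallis integrals *)

Lemma ex_RInt_sin_cos (j n : nat) a b : ex_RInt (fun t => sin t ^ j * cos t ^ n) a b.
Proof. apply ex_RInt_of_ex_derive. intro x. auto_derive. exact I. Qed.

Definition wallis (j n : nat) : R :=
  RInt (fun t => sin t ^ (2 * j) * cos t ^ (2 * n)) 0 (PI / 2).

Lemma wallis_add j n : wallis j n = wallis (S j) n + wallis j (S n).
Proof.
  unfold wallis. rewrite <- (RInt_plus (V := R_CompleteNormedModule)) by apply ex_RInt_sin_cos.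
  apply RInt_ext. intros t _.
  replace (2 * S j)%nat with (2 * j + 2)%nat by lia.
  replace (2 * S n)%nat with (2 * n + 2)%nat by lia.
  change (plus ?x ?y) with (x + y).
  rewrite !pow_add, <- (Rmult_1_r (sin t ^ (2 * j) * cos t ^ (2 * n))), <- (sin2_cos2 t).
  rewrite !Rsqr_pow2. equation_in_R. ring.
Qed.

Lemma is_derive_sin_cos_pow (p q : nat) t :
  is_derive (fun t => sin t ^ S p * cos t ^ S q) t
    (INR (S p) * (sin t ^ p * cos t ^ S (S q)) - INR (S q) * (sin t ^ S (S p) * cos t ^ q)).
Proof.
  auto_derive; [exact I|].
  change (match p with 0%nat => 1 | S _ => INR p + 1 end) with (INR (S p)).
  change (match q with 0%nat => 1 | S _ => INR q + 1 end) with (INR (S q)).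
  rewrite <- !tech_pow_Rmult. ring.
Qed.

Lemma wallis_parts j n : INR (2 * j + 1) * wallis j (S n) = INR (2 * n + 1) * wallis (S j) n.
Proof.
  set (f := fun t => sin t ^ S (2 * j) * cos t ^ S (2 * n)).
  set (g := fun t => sin t ^ (2 * j) * cos t ^ (2 * S n)).
  set (h := fun t => sin t ^ (2 * S j) * cos t ^ (2 * n)).
  assert (HI : is_RInt (fun t => INR (2 * j + 1) * g t - INR (2 * n + 1) * h t)
                 0 (PI / 2) (f (PI / 2) - f 0)).
  { apply (is_RInt_derive (V := R_CompleteNormedModule) f); intros t _.
    - unfold g, h. replace (2 * S n)%nat with (S (S (2 * n))) by lia.
      replace (2 * S j)%nat with (S (S (2 * j))) by lia.
      rewrite !Nat.add_1_r. apply is_derive_sin_cos_pow.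
    - apply ex_derive_continuous_R. unfold g, h. auto_derive. exact I. }
  assert (Hf0 : f (PI / 2) - f 0 = 0) by (unfold f; rewrite cos_PI2, sin_0; simpl; ring).
  rewrite Hf0 in HI. apply (is_RInt_unique (V := R_CompleteNormedModule)) in HI.
  rewrite (RInt_minus (V := R_CompleteNormedModule)) in HI
    by (apply (ex_RInt_scal (V := R_NormedModule)), ex_RInt_sin_cos).
  rewrite (RInt_scal (V := R_CompleteNormedModule) g), (RInt_scal (V := R_CompleteNormedModule) h)
    in HI by apply ex_RInt_sin_cos.
  change (minus ?x ?y) with (x - y) in HI. change (scal ?x ?y) with (x * y) in HI.
  unfold wallis, g, h in *. apply Rminus_diag_uniq, HI.
Qed.

Lemma wallis_S_l j n : wallis (S j) n = INR (2 * j + 1) / INR (2 * j + 2 * n + 2) * wallis j n.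
Proof.
  pose proof (wallis_add j n). pose proof (wallis_parts j n).
  assert (Hsum : INR (2 * j + 2 * n + 2) = INR (2 * j + 1) + INR (2 * n + 1))
    by (rewrite <- plus_INR; f_equal; lia).
  assert (0 < INR (2 * j + 2 * n + 2)) by (apply lt_0_INR; lia).
  rewrite Hsum in *. field_simplify_eq; [|lra]. nra.
Qed.

Lemma wallis_S_r j n : wallis j (S n) = INR (2 * n + 1) / INR (2 * j + 2 * n + 2) * wallis j n.
Proof.
  pose proof (wallis_add j n) as Hadd. rewrite wallis_S_l in Hadd.
  assert (Hsum : INR (2 * j + 2 * n + 2) = INR (2 * j + 1) + INR (2 * n + 1))
    by (rewrite <- plus_INR; f_equal; lia).
  assert (0 < INR (2 * j + 2 * n + 2)) by (apply lt_0_INR; lia).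
  rewrite Hsum in *. field_simplify_eq; [|lra]. field_simplify_eq in Hadd; lra.
Qed.

Lemma wallis_0_0 : wallis 0 0 = PI / 2.
Proof.
  unfold wallis. rewrite (RInt_ext _ (fun _ => 1)) by (intros; simpl; ring).
  rewrite (RInt_const (V := R_CompleteNormedModule)). change (scal ?x ?y) with (x * y). ring.
Qed.

Lemma wallis_closed j n :
  wallis j n = PI / 2 * INR (fact (2 * j)) * INR (fact (2 * n))
               / (4 ^ (j + n) * INR (fact j) * INR (fact n) * INR (fact (j + n))).
Proof.
  revert n; induction j as [|j IHj]; intro n.
  - induction n as [|n IHn]; [rewrite wallis_0_0; simpl; field|].
    rewrite wallis_S_r, IHn. simpl (0 + _)%nat.
    replace (2 * S n)%nat with (S (S (2 * n))) by lia.
    replace (2 * 0 + 2 * n + 2)%nat with (S (S (2 * n))) by lia.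
    rewrite Nat.add_1_r, !fact_simpl, !mult_INR, !S_INR, mult_INR.
    pose proof (INR_fact_neq_0 n). pose proof (INR_fact_neq_0 (2 * n)). pose proof (pos_INR n).
    simpl. field. repeat split; try lra. apply pow_nonzero; lra.
  - rewrite wallis_S_l, IHj.
    replace (2 * S j)%nat with (S (S (2 * j))) by lia.
    replace (S j + n)%nat with (S (j + n)) by lia.
    replace (2 * j + 2 * n + 2)%nat with (S (S (2 * (j + n)))) by lia.
    rewrite Nat.add_1_r, !fact_simpl, !mult_INR, !S_INR, !mult_INR.
    pose proof (INR_fact_neq_0 j). pose proof (INR_fact_neq_0 n).
    pose proof (INR_fact_neq_0 (2 * j)). pose proof (INR_fact_neq_0 (j + n)).
    pose proof (pos_INR j). pose proof (pos_INR (j + n)).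
    simpl. field. repeat split; try lra. apply pow_nonzero; lra.
Qed.

(** * The substitution *)

Lemma cos_atan_sqr y : cos (atan y) ^ 2 = / (1 + y ^ 2).
Proof.
  assert (Hp : 0 < 1 + y²) by (pose proof (Rle_0_sqr y); lra).
  rewrite cos_atan, <- Rsqr_pow2. unfold Rdiv. rewrite Rsqr_mult, Rsqr_inv', Rsqr_sqrt by lra.
  unfold Rsqr. simpl. field. unfold Rsqr in Hp. lra.
Qed.

Lemma sin_atan_sqr y : sin (atan y) ^ 2 = y ^ 2 / (1 + y ^ 2).
Proof.
  assert (Hp : 0 < sqrt (1 + y²)) by (apply sqrt_lt_R0; pose proof (Rle_0_sqr y); lra).
  replace (sin (atan y)) with (y * cos (atan y))
    by (rewrite sin_atan, cos_atan; field; lra).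
  rewrite Rpow_mult_distr, cos_atan_sqr. reflexivity.
Qed.

Definition weight (m : nat) (s t : R) : R :=
  sum_f_R0 (fun j => INR (binom (m + j) (2 * j)) * s ^ j / (s ^ m * sqrt s)
                     * (sin t ^ (2 * j) * cos t ^ (2 * (m - j)))) m.

Lemma ex_derive_weight m s t : ex_derive (weight m s) t.
Proof.
  unfold weight. apply (ex_derive_sum_f_R0 (fun j t => _ * (sin t ^ _ * cos t ^ _))).
  intro j. auto_derive. exact I.
Qed.

Lemma weight_atan m s u : 0 < s ->
  weight m s (atan (u / sqrt s)) = fib_odd m u / (sqrt s * (s + u ^ 2) ^ m).
Proof.
  intro Hs. assert (Hq : 0 < sqrt s) by (apply sqrt_lt_R0; lra).
  assert (HQ : 0 < s + u ^ 2) by (pose proof (pow2_ge_0 u); lra).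
  assert (Hy : (u / sqrt s) ^ 2 = u ^ 2 / s).
  { unfold Rdiv. rewrite Rpow_mult_distr, pow_inv, <- Rsqr_pow2 with (x := sqrt s).
    rewrite Rsqr_sqrt by lra. reflexivity. }
  assert (Hsin : (u / sqrt s) ^ 2 / (1 + (u / sqrt s) ^ 2) = u ^ 2 / (s + u ^ 2))
    by (rewrite Hy; field; lra).
  assert (Hcos : / (1 + (u / sqrt s) ^ 2) = s / (s + u ^ 2)) by (rewrite Hy; field; lra).
  unfold weight, fib_odd. rewrite (Rdiv_def (sum_f_R0 _ m)), (Rmult_comm (sum_f_R0 _ m)), scal_sum.
  apply sum_eq. intros j Hj.
  rewrite !pow_mult, sin_atan_sqr, cos_atan_sqr, Hsin, Hcos.
  replace ((s + u ^ 2) ^ m) with ((s + u ^ 2) ^ j * (s + u ^ 2) ^ (m - j))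
    by (rewrite <- pow_add; f_equal; lia).
  replace (s ^ m) with (s ^ j * s ^ (m - j)) by (rewrite <- pow_add; f_equal; lia).
  unfold Rdiv. rewrite !Rpow_mult_distr, !pow_inv.
  field. repeat split; try apply pow_nonzero; lra.
Qed.

Definition angle (s x : R) : R := atan ((x - / x) / sqrt s).

Lemma is_derive_angle s x : 0 < s -> x <> 0 ->
  is_derive (angle s) x (sqrt s * (1 + / x ^ 2) / (s + (x - / x) ^ 2)).
Proof.
  intros Hs Hx. assert (Hq : 0 < sqrt s) by (apply sqrt_lt_R0; lra).
  assert (Hss : sqrt s * sqrt s = s) by (apply sqrt_sqrt; lra).
  assert (HQ : 0 < s + (x - / x) ^ 2) by (pose proof (pow2_ge_0 (x - / x)); lra).
  unfold angle. auto_derive; [repeat split; lra|].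
  replace (s + (x - / x) ^ 2) with (sqrt s * sqrt s + (x - / x) ^ 2) in HQ |- *
    by (rewrite Hss; ring).
  set (q := sqrt s) in *. clearbody q.
  field. repeat split; try lra.
  assert (0 < q * q * x ^ 2) by (apply Rmult_lt_0_compat; [nra | apply pow2_gt_0, Hx]).
  pose proof (pow2_ge_0 (x * x - 1)). lra.
Qed.

Definition integrand (m : nat) (a x : R) : R := / (x ^ 4 + 2 * a * x ^ 2 + 1) ^ (m + 1).

Lemma quartic_pos a x : a > -1 -> 0 < x ^ 4 + 2 * a * x ^ 2 + 1.
Proof.
  intro Ha. destruct (Req_dec x 0) as [->|Hx]; [simpl; lra|].
  assert (0 < x ^ 2) by (apply pow2_gt_0, Hx).
  assert (0 <= (x ^ 2 - 1) ^ 2) by apply pow2_ge_0.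
  replace (x ^ 4) with ((x ^ 2 - 1) ^ 2 + 2 * x ^ 2 - 1) by ring. nra.
Qed.

Lemma quartic_factor a x : x <> 0 ->
  x ^ 4 + 2 * a * x ^ 2 + 1 = x ^ 2 * (2 * (a + 1) + (x - / x) ^ 2).
Proof. intro Hx. field. exact Hx. Qed.

Lemma ex_derive_integrand m a : a > -1 -> forall x, ex_derive (integrand m a) x.
Proof.
  intros Ha x. pose proof (quartic_pos a x Ha).
  unfold integrand. auto_derive. apply pow_nonzero. simpl in *. lra.
Qed.

Lemma integrand_reciprocal_sum m a x : a > -1 -> 0 < x ->
  integrand m a x + / x ^ 2 * integrand m a (/ x) =
  weight m (2 * (a + 1)) (angle (2 * (a + 1)) x)
  * (sqrt (2 * (a + 1)) * (1 + / x ^ 2) / (2 * (a + 1) + (x - / x) ^ 2)).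
Proof.
  intros Ha Hx. set (s := 2 * (a + 1)). assert (Hs : 0 < s) by (unfold s; lra).
  assert (Hq : 0 < sqrt s) by (apply sqrt_lt_R0; lra).
  unfold angle, integrand. rewrite weight_atan by exact Hs.
  rewrite !quartic_factor, Rinv_inv by (try apply Rinv_neq_0_compat; lra). fold s.
  set (u := x - / x). replace (/ x - x) with (- u) by (unfold u; ring).
  assert (HQ : 0 < s + u ^ 2) by (pose proof (pow2_ge_0 u); lra).
  assert (Hfib : fib_odd m u = (x ^ (2 * m + 1) + (/ x) ^ (2 * m + 1)) / (x + / x)).
  { rewrite <- fib_odd_reciprocal by lra. unfold u. field.
    split; nra. }
  assert (Hx2 : (x ^ 2) ^ (m + 1) = x ^ (2 * m) * x ^ 2)
    by (rewrite <- pow_mult, <- pow_add; f_equal; lia).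
  assert (Hxo : x ^ (2 * m + 1) = x ^ (2 * m) * x) by (rewrite pow_add; ring).
  replace ((- u) ^ 2) with (u ^ 2) by ring.
  rewrite Hfib, !Rpow_mult_distr, !pow_inv, Hx2, Hxo, (pow_add _ m 1).
  assert (0 < x ^ (2 * m)) by (apply pow_lt; lra).
  assert (0 < (s + u ^ 2) ^ m) by (apply pow_lt; lra).
  set (X := x ^ (2 * m)) in *. set (Y := (s + u ^ 2) ^ m) in *. clearbody X Y u s.
  field. repeat split; try lra. nra.
Qed.

Lemma RInt_integrand_split m a b : a > -1 -> 0 < b ->
  RInt (integrand m a) 0 b
  = RInt (integrand m a) 0 (/ b) + RInt (weight m (2 * (a + 1))) 0 (angle (2 * (a + 1)) b).
Proof.
  intros Ha Hb. set (s := 2 * (a + 1)). assert (Hs : 0 < s) by (unfold s; lra).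
  set (D := fun y => RInt (integrand m a) 0 y - RInt (integrand m a) 0 (/ y)
                     - RInt (weight m s) 0 (angle s y)).
  assert (HD : forall t, 0 < t -> is_derive D t 0).
  { intros t Ht.
    assert (HF := is_derive_RInt_0 (integrand m a) t (ex_derive_integrand m a Ha)).
    assert (HFinv : is_derive (fun y => RInt (integrand m a) 0 (/ y)) t
                      (- / t ^ 2 * integrand m a (/ t))).
    { apply (is_derive_comp (RInt (integrand m a) 0) Rinv).
      - apply is_derive_RInt_0, ex_derive_integrand, Ha.
      - auto_derive; [lra|]. field. lra. }
    assert (HG : is_derive (fun y => RInt (weight m s) 0 (angle s y)) t
                   (sqrt s * (1 + / t ^ 2) / (s + (t - / t) ^ 2)
                    * weight m s (angle s t))).
    { apply (is_derive_comp (RInt (weight m s) 0) (angle s)).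
      - apply is_derive_RInt_0, ex_derive_weight.
      - apply is_derive_angle; lra. }
    replace 0 with (integrand m a t - - / t ^ 2 * integrand m a (/ t)
                    - sqrt s * (1 + / t ^ 2) / (s + (t - / t) ^ 2) * weight m s (angle s t)).
    2: { rewrite (Rmult_comm (_ / (s + _))). unfold s.
         rewrite <- integrand_reciprocal_sum by lra. ring. }
    apply (is_derive_minus (K := R_AbsRing) (V := R_NormedModule)); [|exact HG].
    apply (is_derive_minus (K := R_AbsRing) (V := R_NormedModule)); assumption. }
  assert (HD1 : D 1 = 0).
  { unfold D, angle. rewrite Rinv_1, !Rminus_diag. unfold Rdiv. rewrite Rmult_0_l, atan_0.
    rewrite (RInt_point (V := R_CompleteNormedModule)). change (zero : R) with 0. ring. }
  pose proof (derive_zero_const_pos D b 1 Hb Rlt_0_1 HD) as HDb.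
  unfold D in HDb, HD1. lra.
Qed.

Lemma RInt_weight m s :
  RInt (weight m s) 0 (PI / 2)
  = sum_f_R0 (fun j => INR (binom (m + j) (2 * j)) * s ^ j / (s ^ m * sqrt s)
                       * wallis j (m - j)) m.
Proof.
  apply (is_RInt_unique (V := R_CompleteNormedModule)), is_RInt_sum_f_R0. intro j.
  apply (is_RInt_scal (V := R_NormedModule)), (RInt_correct (V := R_CompleteNormedModule)).
  apply ex_RInt_sin_cos.
Qed.

Lemma weight_term_integral m s k : (k <= m)%nat -> 0 < s ->
  INR (binom (m + k) (2 * k)) * s ^ k / (s ^ m * sqrt s) * wallis k (m - k)
  = PI / 2 / 2 ^ (2 * m) * (d_weight m k / 2 ^ k) * s ^ k / (s ^ m * sqrt s).
Proof.
  intros Hk Hs. assert (0 < sqrt s) by (apply sqrt_lt_R0; lra).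
  rewrite wallis_closed, INR_binom by lia. unfold d_weight, Binomial.C.
  replace (m + k - 2 * k)%nat with (m - k)%nat by lia.
  replace (2 * m - 2 * k - (m - k))%nat with (m - k)%nat by lia.
  replace (m + k - m)%nat with k by lia.
  replace (k + (m - k))%nat with m by lia.
  replace (2 * (m - k))%nat with (2 * m - 2 * k)%nat by lia.
  rewrite pow_mult. replace (2 ^ 2) with 4 by ring.
  pose proof (INR_fact_neq_0 k). pose proof (INR_fact_neq_0 (m - k)).
  pose proof (INR_fact_neq_0 m). pose proof (INR_fact_neq_0 (2 * k)).
  pose proof (INR_fact_neq_0 (m + k)).
  field. repeat split; try lra; apply pow_nonzero; lra.
Qed.

Lemma weight_integral_value m a : a > -1 ->
  RInt (weight m (2 * (a + 1))) 0 (PI / 2)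
  = PI / 2 * P_poly m a / Rpower (2 * (a + 1)) (INR m + / 2).
Proof.
  intro Ha. equation_in_R.
  set (s := 2 * (a + 1)). assert (Hs : 0 < s) by (unfold s; lra).
  assert (0 < sqrt s) by (apply sqrt_lt_R0; lra).
  rewrite Rpower_plus, Rpower_pow, Rpower_sqrt, RInt_weight, P_poly_shifted by exact Hs.
  rewrite (sum_eq _ (fun k => d_weight m k * (a + 1) ^ k
                              * (PI / 2 / 2 ^ (2 * m) / (s ^ m * sqrt s)))).
  - rewrite <- scal_sum. field. repeat split; try apply pow_nonzero; lra.
  - intros k Hk. rewrite weight_term_integral by assumption.
    unfold s in *. rewrite Rpow_mult_distr. field. repeat split; try apply pow_nonzero; lra.
Qed.

Lemma atan_p_infty : filterlim atan (Rbar_locally p_infty) (locally (PI / 2)).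
Proof.
  intros P [eps HP]. pose proof PI_RGT_0.
  set (d := Rmin eps (PI / 2)).
  assert (Hd : 0 < d <= eps /\ d <= PI / 2)
    by (unfold d; repeat split;
        [apply Rmin_pos; [apply cond_pos|lra] | apply Rmin_l | apply Rmin_r]).
  exists (tan (PI / 2 - d)). intros y Hy. apply HP.
  assert (PI / 2 - d < atan y)
    by (rewrite <- (atan_tan (PI / 2 - d)) by lra; apply atan_increasing, Hy).
  pose proof (atan_bound y).
  change (Rabs (atan y - PI / 2) < eps). rewrite Rabs_left by lra. lra.
Qed.

Lemma angle_p_infty s : 0 < s ->
  filterlim (angle s) (Rbar_locally p_infty) (locally (PI / 2)).
Proof.
  intro Hs. assert (Hq : 0 < sqrt s) by (apply sqrt_lt_R0; lra).
  apply (filterlim_comp _ _ _ (fun x => (x - / x) / sqrt s) atan _ (Rbar_locally p_infty));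
    [|apply atan_p_infty].
  intros P [M HM]. exists (Rmax 1 (Rabs M * sqrt s + 1)). intros x Hx. apply HM.
  pose proof (Rmax_l 1 (Rabs M * sqrt s + 1)). pose proof (Rmax_r 1 (Rabs M * sqrt s + 1)).
  assert (/ x < 1) by (rewrite <- Rinv_1; apply Rinv_lt_contravar; lra).
  apply Rle_lt_trans with (Rabs M); [apply Rle_abs|].
  apply Rmult_lt_reg_r with (sqrt s); [exact Hq|].
  unfold Rdiv. rewrite Rmult_assoc, Rinv_l, Rmult_1_r by lra. lra.
Qed.

Lemma RInt_integrand_p_infty m a : a > -1 ->
  filterlim (fun b => RInt (integrand m a) 0 b) (Rbar_locally p_infty)
    (locally (RInt (weight m (2 * (a + 1))) 0 (PI / 2))).
Proof.
  intro Ha. set (s := 2 * (a + 1)). assert (Hs : 0 < s) by (unfold s; lra).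
  apply (filterlim_ext_loc
           (fun b => RInt (integrand m a) 0 (/ b) + RInt (weight m s) 0 (angle s b))).
  { exists 0. intros b Hb. symmetry. apply RInt_integrand_split; assumption. }
  rewrite <- (Rplus_0_l (RInt (weight m s) 0 (PI / 2))).
  apply (filterlim_comp_2 (G := locally 0) (H := locally (RInt (weight m s) 0 (PI / 2)))
           _ _ Rplus);
    [| |apply (filterlim_plus (V := R_NormedModule))].
  - apply (filterlim_comp _ _ _ Rinv (RInt (integrand m a) 0) _ (locally 0)).
    + exact (filterlim_Rbar_inv p_infty ltac:(discriminate)).
    + pose proof (continuous_RInt_0 (integrand m a) 0 (ex_derive_integrand m a Ha)) as HF.
      unfold continuous in HF. rewrite (RInt_point (V := R_CompleteNormedModule)) in HF.
      exact HF.
  - apply (filterlim_comp _ _ _ (angle s) (RInt (weight m s) 0) _ (locally (PI / 2)));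
      [exact (angle_p_infty s Hs)|].
    apply continuous_RInt_0, ex_derive_weight.
Qed.

Lemma improper_integral_of_p_infty (f : R -> R) (L : R) :
  (forall b, ex_RInt f 0 b) ->
  filterlim (fun b => RInt f 0 b) (Rbar_locally p_infty) (locally L) ->
  improper_integral_0_infty f L.
Proof.
  intros Hf Hlim. exists (fun b => ex_RInt_Reals_0 f 0 b (Hf b)).
  intros eps Heps. destruct (Hlim _ (locally_ball L (mkposreal eps Heps))) as [M HM].
  exists (M + 1). intros b Hb. rewrite <- RInt_Reals. apply HM. lra.
Qed.

Theorem mainTheorem1 (m : nat) (a : R) (ha : a > -1) :
  improper_integral_0_infty (fun x => / (x ^ 4 + 2 * a * x ^ 2 + 1) ^ (m + 1))
    (PI / 2 * P_poly m a / Rpower (2 * (a + 1)) (INR m + / 2))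
  /\ (forall l : nat, (l <= m)%nat ->
        0 < d_coef l m /\ exists q : Q, Q2R q = d_coef l m)
  /\ ((1 <= m)%nat -> forall l : nat, (l <= m)%nat ->
        exists z : Z, 2 ^ (2 * m - 1) * d_coef l m = IZR z).
Proof.
  split; [|split].
  - rewrite <- weight_integral_value by exact ha.
    apply (improper_integral_of_p_infty (integrand m a)).
    + intro b. apply ex_RInt_of_ex_derive, ex_derive_integrand, ha.
    + apply RInt_integrand_p_infty, ha.
  - intros l Hl. split; [apply d_coef_pos | apply d_coef_rational, Hl].
  - intros Hm l Hl. apply d_coef_integral; assumption.
Qed.
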